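(* Let $F:\mathbb{R}^n\rightrightarrows\mathbb{R}^p$ and $G:\mathbb{R}^p\rightrightarrows\mathbb{R}^q$ be nearly convex set-valued mappings with $\operatorname{ri}(\operatorname{rge} F)\cap\operatorname{ri}(\operatorname{dom} G)\neq\emptyset$. Define $M_0(x,z)=\operatorname{ri} F(x)\cap\operatorname{ri} G^{-1}(z)$ for $(x,z)\in\mathbb{R}^n\times\mathbb{R}^q$ and $\operatorname{dom} M_0=\{(x,z):M_0(x,z)\neq\emptyset\}$. Then $$\operatorname{ri}\big(\operatorname{gph}(G\circ F)\big)=\big[\operatorname{ri}(\operatorname{dom} F)\times\operatorname{ri}(\operatorname{rge} G)\big]\cap\operatorname{dom} M_0.$$
   Context: A set $\Omega\subset\mathbb{R}^k$ is nearly convex if there is a convex set $C$ with $C\subset\Omega\subset\overline{C}$. For an arbitrary set $\Omega$, $\operatorname{ri}\Omega=\{a\in\Omega:\exists\delta>0,\ B(a;\delta)\cap\operatorname{aff}\Omega\subset\Omega\}$. For a set-valued mapping $F$: $\operatorname{dom} F=\{x:F(x)\neq\emptyset\}$, $\operatorname{rge} F=\bigcup_x F(x)$, $\operatorname{gph} F=\{(x,y):y\in F(x)\}$; $F$ is nearly convex if $\operatorname{gph} F$ is nearly convex. $G^{-1}(z)=\{y: z\in G(y)\}$, and $(G\circ F)(x)=\bigcup_{y\in F(x)}G(y)$. *)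

From HB Require Import structures.
From mathcomp Require Import all_boot all_order all_algebra.
From mathcomp Require Import boolp classical_sets reals.
Set Implicit Arguments. Unset Strict Implicit. Unset Printing Implicit Defensive.
Import Order.TTheory GRing.Theory Num.Theory.
Local Open Scope ring_scope.
Local Open Scope classical_set_scope.

(* R^k is represented by row vectors 'rV[R]_k; R^n x R^m is identified with
   R^(n+m) via row_mx. *)

Section Defs.
Variable R : realType.

Definition sqdist (k : nat) (x y : 'rV[R]_k) : R :=
  \sum_(i < k) (x ord0 i - y ord0 i) ^+ 2.

Definition eball (k : nat) (a : 'rV[R]_k) (d : R) : set 'rV[R]_k :=
  [set x | sqdist x a < d ^+ 2].

Definition convex_set_R (k : nat) (C : set 'rV[R]_k) : Prop :=
  forall x y (t : R), C x -> C y -> 0 <= t -> t <= 1 ->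
    C (t *: x + (1 - t) *: y).

Definition eclosure (k : nat) (C : set 'rV[R]_k) : set 'rV[R]_k :=
  [set x | forall e : R, 0 < e -> exists y, C y /\ eball x e y].

Definition nearly_convex (k : nat) (O : set 'rV[R]_k) : Prop :=
  exists C : set 'rV[R]_k, convex_set_R C /\ C `<=` O /\ O `<=` eclosure C.

Definition aff (k : nat) (O : set 'rV[R]_k) : set 'rV[R]_k :=
  [set x | exists (m : nat) (l : 'I_m -> R) (P : 'I_m -> 'rV[R]_k),
     (forall i, O (P i)) /\ \sum_(i < m) l i = 1 /\
     x = \sum_(i < m) l i *: P i].

Definition ri (k : nat) (O : set 'rV[R]_k) : set 'rV[R]_k :=
  [set a | O a /\ exists d : R, 0 < d /\ eball a d `&` aff O `<=` O].

Definition dom (n p : nat) (F : 'rV[R]_n -> set 'rV[R]_p) : set 'rV[R]_n :=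
  [set x | F x !=set0].
Definition rge (n p : nat) (F : 'rV[R]_n -> set 'rV[R]_p) : set 'rV[R]_p :=
  [set y | exists x, F x y].
Definition gph (n p : nat) (F : 'rV[R]_n -> set 'rV[R]_p) : set 'rV[R]_(n + p) :=
  [set v | exists x y, F x y /\ v = row_mx x y].
Definition nearly_convex_map (n p : nat) (F : 'rV[R]_n -> set 'rV[R]_p) : Prop :=
  nearly_convex (gph F).
Definition inv_map (p q : nat) (G : 'rV[R]_p -> set 'rV[R]_q) : 'rV[R]_q -> set 'rV[R]_p :=
  fun z => [set y | G y z].
Definition comp_map (n p q : nat) (G : 'rV[R]_p -> set 'rV[R]_q)
  (F : 'rV[R]_n -> set 'rV[R]_p) : 'rV[R]_n -> set 'rV[R]_q :=
  fun x => [set z | exists y, F x y /\ G y z].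

Definition M0 (n p q : nat) (F : 'rV[R]_n -> set 'rV[R]_p)
  (G : 'rV[R]_p -> set 'rV[R]_q) (x : 'rV[R]_n) (z : 'rV[R]_q) : set 'rV[R]_p :=
  ri (F x) `&` ri (inv_map G z).
Definition domM0 (n p q : nat) (F : 'rV[R]_n -> set 'rV[R]_p)
  (G : 'rV[R]_p -> set 'rV[R]_q) : set 'rV[R]_(n + q) :=
  [set v | exists x z, M0 F G x z !=set0 /\ v = row_mx x z].
End Defs.

From HB Require Import structures.
From mathcomp Require Import all_boot all_order all_algebra.
From mathcomp Require Import boolp classical_sets reals.
From mathcomp Require Import ring lra.
Import Order.TTheory GRing.Theory Num.Theory.
Set Implicit Arguments. Unset Strict Implicit. Unset Printing Implicit Defensive.
Local Open Scope ring_scope.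
Local Open Scope classical_set_scope.

(* For a convex set C, the relative interior coincides with the intrinsic core icr C:
   the points a of C from which every segment [b, a], b in C, extends beyond a inside C.
   By the line segment principle this also holds for every Omega with
   C <= Omega <= cl C, i.e. ri Omega = icr C.  Unlike ri, icr is purely algebraic:
   it commutes with affine images, with affine preimages meeting the core, and with
   intersections having a common core point.  Now gph (G o F) is the image under
   (x, y, z) |-> (x, z) of the chain {(x, y, z) | (x, y) in gph F, (y, z) in gph G};
   the qualification condition yields a point whose projections lie in both cores,
   which makes the chain nearly convex and lets all three rules apply. *)

Section SquaredNorm.
Variable R : realType.
Implicit Type k : nat.

Definition sqnorm k (v : 'rV[R]_k) : R := \sum_(i < k) v ord0 i ^+ 2.

Lemma sqdistE k (x y : 'rV[R]_k) : sqdist x y = sqnorm (x - y).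
Proof. by apply: eq_bigr => i _; rewrite !mxE. Qed.

Lemma sqdistC k (x y : 'rV[R]_k) : sqdist x y = sqdist y x.
Proof. by apply: eq_bigr => i _; ring. Qed.

Lemma sqdistxx k (x : 'rV[R]_k) : sqdist x x = 0.
Proof. by rewrite /sqdist big1 // => i _; rewrite subrr expr0n. Qed.

Lemma sqnorm_ge0 k (v : 'rV[R]_k) : 0 <= sqnorm v.
Proof. by apply: sumr_ge0 => i _; rewrite sqr_ge0. Qed.

Lemma sqnormZ k (a : R) (v : 'rV[R]_k) : sqnorm (a *: v) = a ^+ 2 * sqnorm v.
Proof. by rewrite /sqnorm mulr_sumr; apply: eq_bigr => i _; rewrite !mxE exprMn. Qed.

Lemma sqnormD_le k (x y : 'rV[R]_k) : sqnorm (x + y) <= 2 * sqnorm x + 2 * sqnorm y.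
Proof.
rewrite /sqnorm !mulr_sumr -big_split /=; apply: ler_sum => i _; rewrite !mxE.
have := sqr_ge0 (x ord0 i - y ord0 i); nra.
Qed.

Lemma norm_coord_lt k (v : 'rV[R]_k) (e : R) i :
  0 < e -> sqnorm v < e ^+ 2 -> `|v ord0 i| < e.
Proof.
move=> e0 hv; rewrite -(@ltr_pXn2r _ 2) ?nnegrE ?normr_ge0 ?ltW // real_normK ?num_real //.
apply: le_lt_trans hv; rewrite /sqnorm (bigD1 i) //= lerDl.
by apply: sumr_ge0 => j _; exact: sqr_ge0.
Qed.

Lemma sqdist_row_mx n p (x x' : 'rV[R]_n) (y y' : 'rV[R]_p) :
  sqdist (row_mx x y) (row_mx x' y') = sqdist x x' + sqdist y y'.
Proof.
by rewrite /sqdist big_split_ord; congr (_ + _); apply: eq_bigr => i _;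
  rewrite ?row_mxEl ?row_mxEr.
Qed.

Lemma norm_mulmx_coord_le k m (v : 'rV[R]_k) (K : 'M[R]_(k, m)) (d : R) j :
  (forall i, `|v ord0 i| <= d) -> `|(v *m K) ord0 j| <= d * \sum_i `|K i j|.
Proof.
move=> hv; rewrite !mxE mulr_sumr; apply: le_trans (ler_norm_sum _ _ _) _.
by apply: ler_sum => i _; rewrite normrM ler_wpM2r.
Qed.

Lemma small_scale (N d : R) : 0 <= N -> 0 < d ->
  exists e : R, [/\ 0 < e, e < 1 & e ^+ 2 * N < d ^+ 2].
Proof.
move=> N0 d0; have d20 : 0 < d ^+ 2 by rewrite exprn_gt0.
have h0 : 0 < 1 + d ^+ 2 + N by lra.
pose e := d ^+ 2 / (1 + d ^+ 2 + N).
have e0 : 0 < e by rewrite divr_gt0.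
have e1 : e < 1 by rewrite ltr_pdivrMr //; lra.
have eN : e * N < d ^+ 2 by rewrite /e mulrAC ltr_pdivrMr //; nra.
by exists e; split => //; nra.
Qed.

End SquaredNorm.

Section IntrinsicCore.
Variable R : realType.
Implicit Types k l : nat.

Definition icr k (C : set 'rV[R]_k) : set 'rV[R]_k :=
  [set a | C a /\ forall b, C b -> exists e : R, 0 < e /\ C (a + e *: (a - b))].

Definition affine_map k l (f : 'rV[R]_k -> 'rV[R]_l) :=
  forall (t : R) x y, f (t *: x + (1 - t) *: y) = t *: f x + (1 - t) *: f y.

Lemma extensionE k (a b : 'rV[R]_k) (e : R) :
  a + e *: (a - b) = (1 + e) *: a + (1 - (1 + e)) *: b.
Proof. by apply/rowP => j; rewrite !mxE; ring. Qed.

Lemma extension_convex_comb k (a c : 'rV[R]_k) (e : R) : 0 < e ->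
  exists t : R, [/\ 0 <= t, t < 1 & a = t *: (a + e *: (a - c)) + (1 - t) *: c].
Proof.
move=> e0; have e1 : 1 + e != 0 by rewrite gt_eqF //; lra.
exists (1 + e)^-1; split; first by rewrite invr_ge0; lra.
  by rewrite invf_lt1; lra.
by apply/rowP => j; rewrite !mxE; field.
Qed.

Lemma affine_map_extension k l (f : 'rV[R]_k -> 'rV[R]_l) x y (e : R) :
  affine_map f -> f (x + e *: (x - y)) = f x + e *: (f x - f y).
Proof. by move=> hf; rewrite !extensionE hf. Qed.

Lemma icr_sub k (C : set 'rV[R]_k) : icr C `<=` C.
Proof. by move=> a []. Qed.

Lemma convex_setI k (A B : set 'rV[R]_k) :
  convex_set_R A -> convex_set_R B -> convex_set_R (A `&` B).
Proof. by move=> hA hB x y t [Ax Bx] [Ay By] t0 t1; split; [apply: hA | apply: hB]. Qed.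

Lemma convex_image k l (C : set 'rV[R]_k) (f : 'rV[R]_k -> 'rV[R]_l) :
  convex_set_R C -> affine_map f -> convex_set_R (f @` C).
Proof.
move=> cvx hf _ _ t [x Cx <-] [y Cy <-] t0 t1.
by exists (t *: x + (1 - t) *: y); [exact: cvx | exact: hf].
Qed.

Lemma convex_preimage k l (C : set 'rV[R]_l) (f : 'rV[R]_k -> 'rV[R]_l) :
  convex_set_R C -> affine_map f -> convex_set_R (f @^-1` C).
Proof. by move=> cvx hf x y t Cx Cy t0 t1; rewrite /preimage /= hf; apply: cvx. Qed.

Section ConvexCore.
Variables (k : nat) (C : set 'rV[R]_k).
Hypothesis cvxC : convex_set_R C.

Lemma icr_segment c a (t : R) :
  icr C c -> C a -> 0 <= t -> t < 1 -> icr C (t *: a + (1 - t) *: c).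
Proof.
move=> [Cc hc] Ca t0 t1; split; first by apply: cvxC => //; exact: ltW.
move=> b Cb; have [e [e0 Ce]] := hc b Cb.
have h0 : 0 < 1 + e * t by nra.
(* The extended point is a convex combination of [a] and the extension of [c]. *)
exists (e * (1 - t) / (1 + e * t)); split.
  by rewrite divr_gt0 // mulr_gt0 // subr_gt0.
have -> : t *: a + (1 - t) *: c + e * (1 - t) / (1 + e * t) *: (t *: a + (1 - t) *: c - b)
   = ((1 - t) / (1 + e * t)) *: (c + e *: (c - b)) + (1 - (1 - t) / (1 + e * t)) *: a.
  by apply/rowP => j; rewrite !mxE; field; rewrite gt_eqF.
apply: cvxC => //; first by rewrite divr_ge0 //; lra.
by rewrite ler_pdivrMr //; nra.
Qed.

Lemma icr_extension_shrink a b (e1 e : R) :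
  C a -> C (a + e1 *: (a - b)) -> 0 < e -> e <= e1 -> C (a + e *: (a - b)).
Proof.
move=> Ca Ce1 e0 ee1; have e10 : 0 < e1 by lra.
have -> : a + e *: (a - b) = (e / e1) *: (a + e1 *: (a - b)) + (1 - e / e1) *: a.
  by apply/rowP => j; rewrite !mxE; field; rewrite gt_eqF.
apply: cvxC => //; first by rewrite divr_ge0 // ltW.
by rewrite ler_pdivrMr // mul1r.
Qed.

Lemma icr_image l (f : 'rV[R]_k -> 'rV[R]_l) c :
  affine_map f -> icr C c -> icr (f @` C) = f @` icr C.
Proof.
move=> hf pc; apply/seteqP; split => u; last first.
  move=> [a [Ca ha] <-]; split; first by exists a.
  move=> _ [b Cb <-]; have [e [e0 Ce]] := ha b Cb.
  by exists e; split => //; exists (a + e *: (a - b)) => //; rewrite affine_map_extension.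
move=> [_ hu]; have [e [e0 [a' Ca' ha']]] := hu (f c) (ex_intro2 _ _ c (icr_sub pc) erefl).
have [t [t0 t1 ->]] := extension_convex_comb u (f c) e0.
by exists (t *: a' + (1 - t) *: c); [exact: icr_segment | rewrite hf ha'].
Qed.

End ConvexCore.

Lemma icr_setI k (C1 C2 : set 'rV[R]_k) c :
  convex_set_R C1 -> convex_set_R C2 -> icr C1 c -> icr C2 c ->
  icr (C1 `&` C2) = icr C1 `&` icr C2.
Proof.
move=> cv1 cv2 pc1 pc2; apply/seteqP; split => a.
  move=> [[C1a C2a] ha].
  have [e [e0 [Ce1 Ce2]]] := ha c (conj (icr_sub pc1) (icr_sub pc2)).
  have [t [t0 t1 ->]] := extension_convex_comb a c e0.
  by split; exact: icr_segment.
move=> [[C1a h1] [C2a h2]]; split => // b [C1b C2b].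
have [e1 [e10 E1]] := h1 b C1b; have [e2 [e20 E2]] := h2 b C2b.
have s0 : 0 < e1 + e2 by lra.
have ee0 : 0 < e1 * e2 / (e1 + e2) by rewrite divr_gt0 // mulr_gt0.
exists (e1 * e2 / (e1 + e2)); split => //; split.
  by apply: (icr_extension_shrink cv1 C1a E1) => //; rewrite ler_pdivrMr //; nra.
by apply: (icr_extension_shrink cv2 C2a E2) => //; rewrite ler_pdivrMr //; nra.
Qed.

Lemma icr_preimage k l (C : set 'rV[R]_l) (g : 'rV[R]_k -> 'rV[R]_l) y0 :
  convex_set_R C -> affine_map g -> icr C (g y0) ->
  icr (g @^-1` C) = g @^-1` icr C.
Proof.
move=> cvx hg p0; apply/seteqP; split => y.
  move=> [Cy hy]; have [e [e0 Ce]] := hy y0 (icr_sub p0).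
  have [t [t0 t1 ->]] := extension_convex_comb y y0 e0.
  by rewrite /preimage /= hg; exact: icr_segment.
move=> [Cy hy]; split => // b Cb; have [e [e0 Ce]] := hy (g b) Cb.
by exists e; split => //; rewrite /preimage /= affine_map_extension.
Qed.

End IntrinsicCore.

Section RelativeInterior.
Variable R : realType.
Implicit Types k l m : nat.

Lemma eclosure_mono k (A B : set 'rV[R]_k) : A `<=` B -> eclosure A `<=` eclosure B.
Proof. by move=> AB x hx e e0; have [y [Ay hy]] := hx e e0; exists y; split => //; exact: AB. Qed.

Lemma sub_eclosure k (A : set 'rV[R]_k) : A `<=` eclosure A.
Proof. by move=> x Ax e e0; exists x; split => //; rewrite /eball /= sqdistxx exprn_gt0. Qed.

Lemma aff_segment k (O : set 'rV[R]_k) x y (t : R) :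
  O x -> O y -> aff O (t *: x + (1 - t) *: y).
Proof.
move=> Ox Oy; exists 2%N, (fun i : 'I_2 => if val i == 0%N then t else 1 - t),
  (fun i : 'I_2 => if val i == 0%N then x else y).
split; first by move=> i; case: (val i == 0%N).
by rewrite !big_ord_recl !big_ord0 /=; split; [ring | rewrite addr0].
Qed.

Definition affine_set k (S : set 'rV[R]_k) :=
  forall (t : R) x y, S x -> S y -> S (t *: x + (1 - t) *: y).

(* [ri O] is [ri_in (aff O) O]. *)
Definition ri_in k (S X : set 'rV[R]_k) : set 'rV[R]_k :=
  [set a | X a /\ exists d : R, 0 < d /\ forall u, S u -> sqdist u a < d ^+ 2 -> X u].

Definition flat k m (c0 : 'rV[R]_k) (W : 'M[R]_(m, k)) : set 'rV[R]_k :=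
  [set x | (x - c0 <= W)%MS].

Lemma flat_affine k m (c0 : 'rV[R]_k) (W : 'M[R]_(m, k)) : affine_set (flat c0 W).
Proof.
move=> t x y; rewrite /flat /= => hx hy.
have -> : t *: x + (1 - t) *: y - c0 = t *: (x - c0) + (1 - t) *: (y - c0).
  by apply/rowP => j; rewrite !mxE; ring.
by rewrite addmx_sub // scalemx_sub.
Qed.

Arguments flat_affine {k m} c0 W.

Lemma aff_sub_flat k m (c0 : 'rV[R]_k) (W : 'M[R]_(m, k)) (O : set 'rV[R]_k) :
  O `<=` flat c0 W -> aff O `<=` flat c0 W.
Proof.
move=> OS x [n [l [P [hP [hl ->]]]]]; rewrite /flat /=.
have <- : \sum_(i < n) l i *: (P i - c0) = \sum_(i < n) l i *: P i - c0.
  under eq_bigr do rewrite scalerBr.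
  by rewrite sumrB -scaler_suml hl scale1r.
by apply: summx_sub => i _; apply/scalemx_sub/OS.
Qed.

(* [(x - c0) *m cokermx W] vanishes on the flat, so a nonzero coordinate of it keeps
   [x] away from the flat. *)
Lemma flat_closed k m (c0 : 'rV[R]_k) (W : 'M[R]_(m, k)) :
  eclosure (flat c0 W) `<=` flat c0 W.
Proof.
move=> x hx; apply: contraT; rewrite submxE => hc.
set K := cokermx W in hc *; set v := (x - c0) *m K in hc.
have [j hj] : exists j, v ord0 j != 0.
  apply/existsP; apply: contraTT hc => /existsPn h; rewrite negbK.
  by apply/eqP/rowP => j; move: (h j); rewrite negbK => /eqP ->; rewrite mxE.
set eta := `|v ord0 j|; have eta0 : 0 < eta by rewrite normr_gt0.
set M := 1 + \sum_i `|K i j|.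
have M0 : 0 < M by rewrite ltr_pwDl // sumr_ge0.
have e0 : 0 < eta / M by rewrite divr_gt0.
have [y [+ hy]] := hx _ e0; rewrite /flat /= submxE => /eqP Sy.
rewrite /eball /= sqdistC sqdistE in hy.
have hxy : (x - y) *m K = v.
  have -> : x - y = (x - c0) - (y - c0) by apply/rowP => i; rewrite !mxE; ring.
  by rewrite mulmxBl Sy subr0.
have := norm_mulmx_coord_le K j (fun i => ltW (norm_coord_lt i e0 hy)).
rewrite hxy -/eta => hb.
have : eta / M * \sum_i `|K i j| < eta / M * M by rewrite ltr_pM2l // /M ltrDr.
by rewrite divfK ?gt_eqF //; lra.
Qed.

Lemma exists_spanning_rows k (C : set 'rV[R]_k) c0 : C c0 ->
  exists m (W : 'M[R]_(m, k)), (forall i, C (c0 + row i W)) /\ C `<=` flat c0 W.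
Proof.
move=> Cc0.
pose P r := `[< exists m (W : 'M[R]_(m, k)), (forall i, C (c0 + row i W)) /\ \rank W = r >].
have exP : exists r, P r.
  by exists 0%N; apply/asboolP; exists 0%N, 0; split; [case | rewrite mxrank0].
have ubP : forall r, P r -> (r <= k)%N.
  by move=> r /asboolP [m [W [_ <-]]]; exact: rank_leq_col.
case: (ex_maxnP exP ubP) => r /asboolP [m [W [hW hr]]] hmax.
exists m, W; split => // c Cc; apply: contraT => hc.
have hlt : (\rank W < \rank (col_mx W (c - c0)))%N.
  have hs : (W <= col_mx W (c - c0))%MS by rewrite -addsmxE addsmxSl.
  by move: (mxrank_leqif_sup hs) => /leqifP; rewrite col_mx_sub submx_refl (negbTE hc).
have : P (\rank (col_mx W (c - c0))).
  apply/asboolP; exists (m + 1)%N, (col_mx W (c - c0)); split => // i.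
  rewrite -(splitK i); case: (split i) => i' /=; first by rewrite rowKu.
  by rewrite rowKd row_id addrC subrK.
by move=> /hmax; rewrite -hr leqNgt hlt.
Qed.

Lemma convex_sub_comb k m (C : set 'rV[R]_k) c0 (w : 'I_m -> 'rV[R]_k) (l : 'I_m -> R) :
  convex_set_R C -> C c0 -> (forall i, C (c0 + w i)) -> (forall i, 0 <= l i) ->
  \sum_i l i <= 1 -> C (c0 + \sum_i l i *: w i).
Proof.
move=> cvx Cc0; elim: m w l => [|m IH] w l hw hl; first by rewrite !big_ord0 addr0.
pose w' i := w (widen_ord (leqnSn m) i); pose l' i := l (widen_ord (leqnSn m) i).
rewrite !big_ord_recr -/(\sum_i l' i) -/(\sum_i l' i *: w' i) /=.
set lm := l ord_max => hs.
have hs0 : 0 <= \sum_i l' i by apply: sumr_ge0 => i _; exact: hl.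
have [lm1|lm1] := eqVneq lm 1.
  have hz : \sum_i l' i = 0 by lra.
  rewrite big1 ?add0r ?lm1 ?scale1r // => i _.
  by rewrite (psumr_eq0P _ hz) ?scale0r // => j _; apply: hl.
have lm0 : 0 <= lm by apply: hl.
have lmlt : lm < 1 by rewrite lt_neqAle lm1 /=; lra.
have lm10 : 1 - lm != 0 by rewrite gt_eqF //; lra.
have Cr : C (c0 + \sum_i (l' i / (1 - lm)) *: w' i).
  apply: IH => [i | i | ]; [exact: hw | by rewrite divr_ge0 ?hl //; lra | ].
  by rewrite -mulr_suml ler_pdivrMr; lra.
have -> : c0 + (\sum_i l' i *: w' i + lm *: w ord_max)
  = lm *: (c0 + w ord_max) + (1 - lm) *: (c0 + \sum_i (l' i / (1 - lm)) *: w' i).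
  rewrite (scalerDr (1 - lm)) scaler_sumr.
  under [X in _ = _ + (_ + X)]eq_bigr do rewrite scalerA mulrC divfK //.
  by apply/rowP => j; rewrite !mxE; ring.
by apply: cvx; [exact: hw | exact: Cr | exact: lm0 | exact: ltW].
Qed.

Lemma sum_norm_mulmx_le k m (v : 'rV[R]_k) (K : 'M[R]_(k, m)) (d : R) :
  (forall j, `|v ord0 j| <= d) ->
  \sum_i `|(v *m K) ord0 i| <= d * \sum_i \sum_j `|K j i|.
Proof.
by move=> hv; rewrite mulr_sumr; apply: ler_sum => i _; exact: norm_mulmx_coord_le.
Qed.

(* The barycentre of [c0] and the [c0 + row i W] keeps positive weights under small
   perturbations inside the flat. *)
Lemma ri_in_flat_nonempty k m (C : set 'rV[R]_k) c0 (W : 'M[R]_(m, k)) :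
  convex_set_R C -> C c0 -> (forall i, C (c0 + row i W)) ->
  ri_in (flat c0 W) C !=set0.
Proof.
move=> cvx Cc0 hW; pose s : R := (m.+1)%:R^-1.
have s0 : 0 < s by rewrite invr_gt0 ltr0n.
have ms1 : m%:R * s + s = 1.
  by rewrite -[X in _ + X]mul1r -mulrDl natr1 mulfV ?pnatr_eq0.
pose a := c0 + \sum_i s *: row i W.
exists a; split.
  by apply: convex_sub_comb => // [i|]; [exact: ltW | rewrite sumr_const card_ord -mulr_natl; lra].
pose M := \sum_i \sum_j `|pinvmx W j i|.
have M0 : 0 <= M by rewrite sumr_ge0 // => i _; rewrite sumr_ge0.
pose r := s / (2 * (M + 1)).
have r0 : 0 < r by rewrite divr_gt0 // mulr_gt0 //; lra.
have rM : r * M <= s / 2.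
  rewrite /r mulrAC ler_pdivrMr ?mulr_gt0 //; last lra.
  by rewrite (_ : s / 2 * _ = s * (M + 1)); [nra | field].
exists r; split => // u Su; rewrite sqdistE => hu.
have hv : (u - a <= W)%MS.
  rewrite (_ : u - a = (u - c0) - \sum_i s *: row i W); last by rewrite /a opprD addrA.
  by rewrite addmx_sub // ?eqmx_opp summx_sub // => i _; rewrite scalemx_sub // row_sub.
pose mu := (u - a) *m pinvmx W.
have hmu : \sum_i `|mu ord0 i| <= s / 2.
  apply: le_trans rM; apply: sum_norm_mulmx_le => j.
  exact/ltW/norm_coord_lt.
have hmu_i i : `|mu ord0 i| <= s / 2.
  apply: le_trans hmu; rewrite (bigD1 i) //= lerDl.
  by apply: sumr_ge0 => j _; exact: normr_ge0.
have -> : u = c0 + \sum_i (s + mu ord0 i) *: row i W.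
  under eq_bigr do rewrite scalerDl.
  by rewrite big_split /= -mulmx_sum_row mulmxKpV // addrA subrKC.
apply: convex_sub_comb => // [i|].
  by have := hmu_i i; rewrite ler_norml; lra.
rewrite big_split /= sumr_const card_ord -mulr_natl.
have : \sum_i mu ord0 i <= \sum_i `|mu ord0 i| by apply: ler_sum => i _; exact: ler_norm.
lra.
Qed.

Lemma ri_in_segment k (S X : set 'rV[R]_k) c b (t : R) :
  affine_set S -> convex_set_R X -> X `<=` S -> ri_in S X c -> eclosure X b -> S b ->
  0 <= t -> t < 1 -> ri_in S X (t *: b + (1 - t) *: c).
Proof.
move=> aS cvx XS [Xc [d [d0 hd]]] clb Sb t0 t1.
set w := t *: b + (1 - t) *: c.
set rho := (1 - t) * d / 2.
have r0 : 0 < rho by rewrite /rho divr_gt0 // mulr_gt0 // subr_gt0.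
have [b' [Xb' hb']] := clb _ r0; rewrite /eball /= sqdistC sqdistE in hb'.
have t10 : 1 - t != 0 by rewrite gt_eqF //; lra.
have near_w u : S u -> sqdist u w < rho ^+ 2 -> X u.
  rewrite sqdistE => Su hu; set al := (1 - t)^-1.
  (* [u] lies on the segment from [b'] to the point [c3] near [c]. *)
  set c3 := al *: u + (1 - al) *: b'.
  have hc3 : sqdist c3 c < d ^+ 2.
    rewrite sqdistE (_ : c3 - c = al *: (u - w) + (al * t) *: (b - b')); last first.
      by apply/rowP => j; rewrite !mxE /al; field.
    apply: le_lt_trans (sqnormD_le _ _) _; rewrite !sqnormZ.
    have A0 : 0 < al ^+ 2 by rewrite exprn_gt0 // invr_gt0; lra.
    have hA : al ^+ 2 * rho ^+ 2 = d ^+ 2 / 4 by rewrite /al /rho; field.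
    have N2 := sqnorm_ge0 (b - b').
    have h1 : al ^+ 2 * sqnorm (u - w) < al ^+ 2 * rho ^+ 2 by rewrite ltr_pM2l.
    have h2 : al ^+ 2 * sqnorm (b - b') < al ^+ 2 * rho ^+ 2 by rewrite ltr_pM2l.
    have h3 : (al * t) ^+ 2 * sqnorm (b - b') <= al ^+ 2 * sqnorm (b - b').
      rewrite exprMn -mulrA; apply: ler_wpM2l; first exact: ltW.
      have : t ^+ 2 <= 1 by nra.
      nra.
    lra.
  have Xc3 := hd c3 (aS al u b' Su (XS _ Xb')) hc3.
  have -> : u = t *: b' + (1 - t) *: c3 by apply/rowP => j; rewrite !mxE /al; field.
  by apply: cvx => //; exact: ltW.
split; last by exists rho.
by apply: near_w; [exact: aS Sb (XS _ Xc) | rewrite sqdistxx exprn_gt0].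
Qed.

Lemma icr_ri_in k (S C : set 'rV[R]_k) a0 :
  affine_set S -> convex_set_R C -> C `<=` S -> ri_in S C a0 -> icr C = ri_in S C.
Proof.
move=> aS cvx CS ha0; apply/seteqP; split => a.
  move=> [Ca ha]; have [e [e0 Ce]] := ha a0 ha0.1.
  have [t [t0 t1 ->]] := extension_convex_comb a a0 e0.
  by apply: (ri_in_segment aS cvx CS) => //; [exact: sub_eclosure | exact: CS].
move=> [Ca [d [d0 hd]]]; split => // b Cb.
have [e [e0 e1 he]] := small_scale (sqnorm_ge0 (a - b)) d0.
exists e; split => //; apply: hd; first by rewrite extensionE; apply: aS; apply: CS.
by rewrite sqdistE addrAC subrr add0r sqnormZ.
Qed.

Lemma convex_flat_envelope k (C : set 'rV[R]_k) c0 : convex_set_R C -> C c0 ->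
  exists m (W : 'M[R]_(m, k)),
    [/\ C `<=` flat c0 W, icr C = ri_in (flat c0 W) C & ri_in (flat c0 W) C !=set0].
Proof.
move=> cvx Cc0; have [m [W [hW CS]]] := exists_spanning_rows Cc0.
have [a ha] := ri_in_flat_nonempty cvx Cc0 hW.
exists m, W; split => //; last by exists a.
exact: (icr_ri_in (flat_affine c0 W) cvx CS ha).
Qed.

Lemma icr_nonempty k (C : set 'rV[R]_k) : convex_set_R C -> C !=set0 -> icr C !=set0.
Proof.
move=> cvx [c Cc]; have [m [W [_ -> //]]] := convex_flat_envelope cvx Cc.
Qed.

Lemma icr_segment_closure k (C : set 'rV[R]_k) c b (t : R) :
  convex_set_R C -> icr C c -> eclosure C b -> 0 <= t -> t < 1 ->
  C (t *: b + (1 - t) *: c).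
Proof.
move=> cvx pc clb t0 t1.
have [m [W [CS E _]]] := convex_flat_envelope cvx (icr_sub pc).
have Sb : flat c W b by apply/flat_closed/(eclosure_mono CS).
rewrite E in pc.
by have [] := ri_in_segment (flat_affine c W) cvx CS pc clb Sb t0 t1.
Qed.

Lemma ri_nearly_convex k (C O : set 'rV[R]_k) :
  convex_set_R C -> C `<=` O -> O `<=` eclosure C -> ri O = icr C.
Proof.
move=> cvx CO OC; have [[c0 Cc0]|C0] := pselect (C !=set0); last first.
  have O0 a : ~ O a by move=> /OC /(_ 1 ltr01) [y [Cy _]]; apply: C0; exists y.
  by apply/seteqP; split => a [Ha _]; [case: (O0 a Ha) | case: (O0 a (CO a Ha))].
have [m [W [CS E [a0 ha0]]]] := convex_flat_envelope cvx Cc0.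
have OS : O `<=` flat c0 W by move=> x /OC /(eclosure_mono CS) /flat_closed.
rewrite E; apply/seteqP; split => a.
  move=> [Oa [d [d0 hd]]].
  have [e [e0 e1 he]] := small_scale (sqnorm_ge0 (a - a0)) d0.
  have Ob : O (a + e *: (a - a0)).
    apply: hd; split; first by rewrite /eball /= sqdistE addrAC subrr add0r sqnormZ.
    by rewrite extensionE; apply: aff_segment => //; apply/CO/ha0.1.
  have [t [t0 t1 ->]] := extension_convex_comb a a0 e0.
  by apply: (ri_in_segment (flat_affine c0 W) cvx CS ha0) => //; [exact: OC | exact: OS].
move=> [Ca [d [d0 hd]]]; split; first exact: CO.
by exists d; split => // u [hu /(aff_sub_flat OS) Su]; apply/CO/hd.
Qed.

Lemma eclosure_image k l (C : set 'rV[R]_k) (f : 'rV[R]_k -> 'rV[R]_l) :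
  (forall x y, sqdist (f x) (f y) <= sqdist x y) ->
  f @` eclosure C `<=` eclosure (f @` C).
Proof.
move=> hf _ [x hx <-] e e0; have [y [Cy hy]] := hx e e0.
by exists (f y); split; [exists y | exact: le_lt_trans (hf _ _) hy].
Qed.

Lemma eclosure_segment k (P : set 'rV[R]_k) c w :
  (forall t : R, 0 <= t -> t < 1 -> P (t *: w + (1 - t) *: c)) -> eclosure P w.
Proof.
move=> hP e e0; have [s [s0 s1 hs]] := small_scale (sqnorm_ge0 (c - w)) e0.
exists ((1 - s) *: w + (1 - (1 - s)) *: c); split; first by apply: hP; lra.
rewrite /eball /= sqdistE (_ : _ - w = s *: (c - w)) ?sqnormZ //.
by apply/rowP => j; rewrite !mxE; ring.
Qed.

Lemma ri_image k l (C O : set 'rV[R]_k) (f : 'rV[R]_k -> 'rV[R]_l) :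
  convex_set_R C -> C `<=` O -> O `<=` eclosure C -> affine_map f ->
  (forall x y, sqdist (f x) (f y) <= sqdist x y) ->
  ri (f @` O) = f @` icr C.
Proof.
move=> cvx CO OC hf hc; rewrite (@ri_nearly_convex _ (f @` C)).
- have [/(icr_nonempty cvx) [a pa]|C0] := pselect (C !=set0).
    exact: (icr_image cvx hf pa).
  by apply/seteqP; split=> u; [move=> [[x Cx _] _] | move=> [x [Cx _] _]]; case: C0; exists x.
- exact: convex_image.
- by move=> _ [x Cx <-]; exists x => //; exact: CO.
- by move=> _ [x Ox <-]; apply: eclosure_image => //; exists x => //; exact: OC.
Qed.

Lemma ri_preimage k l (C O : set 'rV[R]_l) (g : 'rV[R]_k -> 'rV[R]_l) y0 :
  convex_set_R C -> C `<=` O -> O `<=` eclosure C -> affine_map g -> icr C (g y0) ->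
  ri (g @^-1` O) = g @^-1` icr C.
Proof.
move=> cvx CO OC hg p0; rewrite -(icr_preimage cvx hg p0).
apply: ri_nearly_convex; [exact: convex_preimage | by move=> x /CO |].
move=> x /OC hx; apply: (@eclosure_segment _ _ y0) => t t0 t1.
by rewrite /preimage /= hg; exact: icr_segment_closure.
Qed.

End RelativeInterior.

Section BlockMaps.
Variable R : realType.
Implicit Types n p q : nat.

Lemma linear_affine k l (f : {linear 'rV[R]_k -> 'rV[R]_l}) : affine_map f.
Proof. by move=> t x y; rewrite linearD !linearZ. Qed.

Lemma row_mx_affine k n p (f : 'rV[R]_k -> 'rV[R]_n) (g : 'rV[R]_k -> 'rV[R]_p) :
  affine_map f -> affine_map g -> affine_map (fun w => row_mx (f w) (g w)).
Proof. by move=> hf hg t x y; rewrite hf hg !scale_row_mx add_row_mx. Qed.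

Lemma row_mxl_affine n p (x : 'rV[R]_n) : affine_map (@row_mx R 1 n p x).
Proof. by move=> t y y'; rewrite !scale_row_mx add_row_mx -scalerDl subrKC scale1r. Qed.

Lemma row_mxr_affine n p (z : 'rV[R]_p) : affine_map (fun y : 'rV[R]_n => row_mx y z).
Proof. by move=> t y y'; rewrite !scale_row_mx add_row_mx -[in RHS]scalerDl subrKC scale1r. Qed.

Lemma sqdist_lsubmx_le n p (x y : 'rV[R]_(n + p)) :
  sqdist (lsubmx x) (lsubmx y) <= sqdist x y.
Proof.
by rewrite -{2}(hsubmxK x) -{2}(hsubmxK y) sqdist_row_mx lerDl /sqdist sumr_ge0 // => i _;
  rewrite sqr_ge0.
Qed.

Lemma sqdist_rsubmx_le n p (x y : 'rV[R]_(n + p)) :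
  sqdist (rsubmx x) (rsubmx y) <= sqdist x y.
Proof.
by rewrite -{2}(hsubmxK x) -{2}(hsubmxK y) sqdist_row_mx lerDr /sqdist sumr_ge0 // => i _;
  rewrite sqr_ge0.
Qed.

Definition proj13 n p q (w : 'rV[R]_(n + p + q)) : 'rV[R]_(n + q) :=
  row_mx (lsubmx (lsubmx w)) (rsubmx w).
Definition proj23 n p q (w : 'rV[R]_(n + p + q)) : 'rV[R]_(p + q) :=
  row_mx (rsubmx (lsubmx w)) (rsubmx w).

Lemma proj13_row_mx n p q (x : 'rV[R]_n) (y : 'rV[R]_p) (z : 'rV[R]_q) :
  proj13 (row_mx (row_mx x y) z) = row_mx x z.
Proof. by rewrite /proj13 !row_mxKl row_mxKr. Qed.

Lemma proj23_row_mx n p q (x : 'rV[R]_n) (y : 'rV[R]_p) (z : 'rV[R]_q) :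
  proj23 (row_mx (row_mx x y) z) = row_mx y z.
Proof. by rewrite /proj23 !row_mxKl !row_mxKr. Qed.

Lemma proj13_affine n p q : affine_map (@proj13 n p q).
Proof. by apply: row_mx_affine => t x y; rewrite !linearD !linearZ. Qed.

Lemma proj23_affine n p q : affine_map (@proj23 n p q).
Proof. by apply: row_mx_affine => t x y; rewrite !linearD !linearZ. Qed.

Lemma sqdist_proj13_le n p q (x y : 'rV[R]_(n + p + q)) :
  sqdist (proj13 x) (proj13 y) <= sqdist x y.
Proof.
rewrite -{2}(hsubmxK x) -{2}(hsubmxK y) !sqdist_row_mx lerD2r.
exact: sqdist_lsubmx_le.
Qed.

Lemma row_mx3_surj n p q (w : 'rV[R]_(n + p + q)) :
  exists x y z, w = row_mx (row_mx x y) z.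
Proof. by exists (lsubmx (lsubmx w)), (rsubmx (lsubmx w)), (rsubmx w); rewrite !hsubmxK. Qed.

End BlockMaps.

Arguments proj13 {R n p q}.
Arguments proj23 {R n p q}.

Section Graphs.
Variable R : realType.
Implicit Types n p q : nat.

Lemma gph_row_mx n p (F : 'rV[R]_n -> set 'rV[R]_p) x y : gph F (row_mx x y) <-> F x y.
Proof. by split=> [[x' [y' [h /eq_row_mx [-> ->]]]] | h]; last exists x, y. Qed.

Lemma dom_gph n p (F : 'rV[R]_n -> set 'rV[R]_p) : dom F = lsubmx @` gph F.
Proof.
apply/seteqP; split => x.
  by move=> [y Fy]; exists (row_mx x y); [exact/gph_row_mx | rewrite row_mxKl].
by move=> [_ [x' [y [Fy ->]]] <-]; rewrite row_mxKl; exists y.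
Qed.

Lemma rge_gph n p (F : 'rV[R]_n -> set 'rV[R]_p) : rge F = rsubmx @` gph F.
Proof.
apply/seteqP; split => y.
  by move=> [x Fy]; exists (row_mx x y); [exact/gph_row_mx | rewrite row_mxKr].
by move=> [_ [x [y' [Fy ->]]] <-]; rewrite row_mxKr; exists x.
Qed.

Lemma fiber_gph n p (F : 'rV[R]_n -> set 'rV[R]_p) x : F x = row_mx x @^-1` gph F.
Proof. by apply/seteqP; split => y => [Fy | /gph_row_mx //]; exact/gph_row_mx. Qed.

Lemma inv_map_gph p q (G : 'rV[R]_p -> set 'rV[R]_q) z : inv_map G z = (fun y => row_mx y z) @^-1` gph G.
Proof. by apply/seteqP; split => y => [Gy | /gph_row_mx //]; exact/gph_row_mx. Qed.

Lemma gph_comp n p q (F : 'rV[R]_n -> set 'rV[R]_p) (G : 'rV[R]_p -> set 'rV[R]_q) :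
  gph (comp_map G F) =
  @proj13 R n p q @` (lsubmx @^-1` gph F `&` @proj23 R n p q @^-1` gph G).
Proof.
apply/seteqP; split => v.
  move=> [x [z [[y [Fy Gz]] ->]]]; exists (row_mx (row_mx x y) z); last exact: proj13_row_mx.
  by split; rewrite /preimage /= ?row_mxKl ?proj23_row_mx gph_row_mx.
move=> [w []]; have [x [y [z ->]]] := row_mx3_surj w.
rewrite /preimage /= row_mxKl proj23_row_mx proj13_row_mx !gph_row_mx => Fy Gz <-.
by exists x, z; split => //; exists y.
Qed.

End Graphs.

Section NearlyConvexGraph.
Variable R : realType.
Variables (n p : nat) (F : 'rV[R]_n -> set 'rV[R]_p) (C : set 'rV[R]_(n + p)).
Hypotheses (cvxC : convex_set_R C) (CF : C `<=` gph F) (FC : gph F `<=` eclosure C).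

Lemma ri_dom_gph : ri (dom F) = lsubmx @` icr C.
Proof.
rewrite dom_gph; apply: ri_image => //; [exact: linear_affine | exact: sqdist_lsubmx_le].
Qed.

Lemma ri_rge_gph : ri (rge F) = rsubmx @` icr C.
Proof.
rewrite rge_gph; apply: ri_image => //; [exact: linear_affine | exact: sqdist_rsubmx_le].
Qed.

Lemma ri_fiber_gph x y0 : icr C (row_mx x y0) -> ri (F x) = row_mx x @^-1` icr C.
Proof. by move=> h; rewrite fiber_gph (ri_preimage cvxC CF FC _ h) //; exact: row_mxl_affine. Qed.

Lemma ri_inv_map_gph z y0 :
  icr C (row_mx y0 z) -> ri (inv_map F z) = (fun y => row_mx y z) @^-1` icr C.
Proof.
move=> h; rewrite inv_map_gph (ri_preimage (g := fun y => row_mx y z) cvxC CF FC _ h) //.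
exact: row_mxr_affine.
Qed.

End NearlyConvexGraph.

Section Composition.
Variable R : realType.
Variables (n p q : nat) (F : 'rV[R]_n -> set 'rV[R]_p) (G : 'rV[R]_p -> set 'rV[R]_q).
Variables (CF : set 'rV[R]_(n + p)) (CG : set 'rV[R]_(p + q)).
Hypotheses (cvxF : convex_set_R CF) (CFF : CF `<=` gph F) (FCF : gph F `<=` eclosure CF).
Hypotheses (cvxG : convex_set_R CG) (CGG : CG `<=` gph G) (GCG : gph G `<=` eclosure CG).

Local Notation lsub := (@lsubmx R 1 (n + p) q).
Local Notation pr23 := (@proj23 R n p q).
Let D := lsub @^-1` CF `&` pr23 @^-1` CG.

Lemma convex_chain : convex_set_R D.
Proof.
apply: convex_setI; apply: convex_preimage => //; [exact: linear_affine | exact: proj23_affine].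
Qed.

Variable c : 'rV[R]_(n + p + q).
Hypotheses (cF : icr CF (lsub c)) (cG : icr CG (pr23 c)).

Lemma icr_chain : icr D = lsub @^-1` icr CF `&` pr23 @^-1` icr CG.
Proof.
have eF : icr (lsub @^-1` CF) = lsub @^-1` icr CF.
  by apply: icr_preimage cvxF _ cF; exact: linear_affine.
have eG : icr (pr23 @^-1` CG) = pr23 @^-1` icr CG.
  by apply: icr_preimage cvxG _ cG; exact: proj23_affine.
rewrite /D (icr_setI (c := c)) ?eF ?eG //.
- by apply: convex_preimage => //; exact: linear_affine.
- by apply: convex_preimage => //; exact: proj23_affine.
Qed.

(* This is where the qualification condition enters: [c] lies in both cores. *)
Lemma chain_gph_sub_closure :
  lsub @^-1` gph F `&` pr23 @^-1` gph G `<=` eclosure D.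
Proof.
move=> w [hF hG]; apply: (@eclosure_segment _ _ _ c) => t t0 t1.
split; rewrite /preimage /= ?proj23_affine ?linear_affine.
- exact: icr_segment_closure cvxF cF (FCF hF) t0 t1.
- exact: icr_segment_closure cvxG cG (GCG hG) t0 t1.
Qed.

Lemma ri_gph_comp :
  ri (gph (comp_map G F)) = proj13 @` (lsub @^-1` icr CF `&` pr23 @^-1` icr CG).
Proof.
rewrite gph_comp -icr_chain; apply: ri_image.
- exact: convex_chain.
- by move=> w [hF hG]; split; [exact: CFF | exact: CGG].
- exact: chain_gph_sub_closure.
- exact: proj13_affine.
- exact: sqdist_proj13_le.
Qed.

Lemma proj13_chain_icr :
  proj13 @` (lsub @^-1` icr CF `&` pr23 @^-1` icr CG) =
  [set v | exists x z, ri (dom F) x /\ ri (rge G) z /\ v = row_mx x z] `&` domM0 F G.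
Proof.
rewrite (ri_dom_gph cvxF CFF FCF) (ri_rge_gph cvxG CGG GCG); apply/seteqP; split => v.
  move=> [w []]; have [x [y [z ->]]] := row_mx3_surj w.
  rewrite /preimage /= row_mxKl proj23_row_mx proj13_row_mx => hF hG <-.
  split; exists x, z; split => //.
  - by exists (row_mx x y); rewrite ?row_mxKl.
  - by split => //; exists (row_mx y z); rewrite ?row_mxKr.
  exists y; split.
  - by rewrite (ri_fiber_gph cvxF CFF FCF hF).
  - by rewrite (ri_inv_map_gph cvxG CGG GCG hG).
move=> [[x [z [[wx px ex] [[wz pz ez] ->]]]] [x' [z' [[y [hFy hGy]] /eq_row_mx [ex' ez']]]]].
subst x x' z z'.
move: hFy hGy; rewrite (ri_fiber_gph cvxF CFF FCF (y0 := rsubmx wx)) ?hsubmxK //.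
rewrite (ri_inv_map_gph cvxG CGG GCG (y0 := lsubmx wz)) ?hsubmxK // => hF hG.
exists (row_mx (row_mx (lsubmx wx) y) (rsubmx wz)); last exact: proj13_row_mx.
by rewrite /preimage /= row_mxKl proj23_row_mx.
Qed.

End Composition.

Unset Implicit Arguments.

Theorem theorem3p8 (R : realType) (n p q : nat)
  (F : 'rV[R]_n -> set 'rV[R]_p) (G : 'rV[R]_p -> set 'rV[R]_q) :
  nearly_convex_map F -> nearly_convex_map G ->
  ri (rge F) `&` ri (dom G) !=set0 ->
  ri (gph (comp_map G F)) =
  [set v | exists x z, ri (dom F) x /\ ri (rge G) z /\ v = row_mx x z]
    `&` domM0 F G.
Proof.
move=> [CF [cvxF [CFF FCF]]] [CG [cvxG [CGG GCG]]] [y0 []].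
rewrite (ri_rge_gph cvxF CFF FCF) (ri_dom_gph cvxG CGG GCG) => -[wF cF eF] [wG cG eG].
pose c := row_mx (row_mx (lsubmx wF) y0) (rsubmx wG).
rewrite (ri_gph_comp cvxF CFF FCF cvxG CGG GCG (c := c)).
- exact: proj13_chain_icr.
- by rewrite row_mxKl -eF hsubmxK.
- by rewrite proj23_row_mx -eG hsubmxK.
Qed.
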